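(* Fix $\alpha>0$, $\gamma>0$, $\Sigma_\epsilon>0$, $\omega_1\in[0,1)$, $\omega_2\in[0,1]$. Let $$T(x)=\left(\frac{\omega_2}{x^2}+\frac{(1-\omega_2)\alpha^2\gamma^2\Sigma_\epsilon}{(1+\gamma-x)^2}\right)^{-1/2},\qquad f_y(x)=\left(\frac{\omega_1}{x^2}+\frac{(1-\omega_1)\gamma^2\alpha^2\Sigma_\epsilon}{(1+\gamma-y)^2}\right)^{-1/2},$$ and $A(\lambda)=\frac{\gamma^2\alpha^2\Sigma_\epsilon}{(1+\gamma-\lambda)^2}$. Let $J\subset[1,1+\gamma)$ be a compact $T$-invariant interval, let $\hat I$ be the set of bi-infinite sequences $\pmb\lambda=(\lambda_{2,i})_{i\in\mathbb Z}$ in $J$ with $T(\lambda_{2,i})=\lambda_{2,i+1}$ for all $i$, and let $\hat T:\hat I\to\hat I$ be the shift $\hat T((\lambda_{2,i})_i)=(\lambda_{2,i+1})_i$. Then the random fixed point of the forced bank, i.e. the function $x:\hat I\to(0,\infty)$ satisfying $f_{\lambda_{2,0}}(x(\pmb\lambda))=x(\hat T(\pmb\lambda))$ for all $\pmb\lambda\in\hat I$, is given by $$x(\pmb\lambda)=\frac{1}{\sqrt{(1-\omega_1)\sum_{i=0}^{\infty}A(\lambda_{2,-1-i})\,\omega_1^{\,i}}}$$ (with $\omega_1^0=1$); in particular this series converges, $x$ is positive and satisfies the stated relation.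
   Context: This is the case $\pi_1=0$ of the two-bank leverage model: the large bank's leverage evolves by $\lambda_{2,t+1}=T(\lambda_{2,t})$ and the small bank's by $\lambda_{1,t+1}=f_{\lambda_{2,t}}(\lambda_{1,t})$; $\hat T$ is the invertible (natural) extension of $T$. *)

From Stdlib Require Import Reals ZArith Lra.
From Coquelicot Require Import Coquelicot.
Open Scope R_scope.

Definition Afun (alpha gamma Se l : R) : R :=
  gamma ^ 2 * alpha ^ 2 * Se / (1 + gamma - l) ^ 2.

Definition Tmap (alpha gamma Se w2 x : R) : R :=
  / sqrt (w2 / x ^ 2 + (1 - w2) * alpha ^ 2 * gamma ^ 2 * Se / (1 + gamma - x) ^ 2).

Definition fmap (alpha gamma Se w1 y x : R) : R :=
  / sqrt (w1 / x ^ 2 + (1 - w1) * gamma ^ 2 * alpha ^ 2 * Se / (1 + gamma - y) ^ 2).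

Definition inIhat (alpha gamma Se w2 a b : R) (lam : Z -> R) : Prop :=
  forall i : Z, a <= lam i <= b /\ Tmap alpha gamma Se w2 (lam i) = lam (i + 1)%Z.

Definition Tshift (lam : Z -> R) : Z -> R := fun i => lam (i + 1)%Z.

Definition xterm (alpha gamma Se w1 : R) (lam : Z -> R) (i : nat) : R :=
  Afun alpha gamma Se (lam (- 1 - Z.of_nat i)%Z) * w1 ^ i.

Definition xfix (alpha gamma Se w1 : R) (lam : Z -> R) : R :=
  1 / sqrt ((1 - w1) * Series (xterm alpha gamma Se w1 lam)).

(* Write S(lam) for the series sum_i A(lam_{-1-i}) w1^i, so that x(lam)^-2 = (1-w1) S(lam).
   Shifting the orbit prepends the term A(lam_0) and multiplies the rest by w1:
   S(T lam) = A(lam_0) + w1 S(lam).  Hence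
   f_{lam_0}(x(lam))^-2 = w1 x(lam)^-2 + (1-w1) A(lam_0) = (1-w1) S(T lam) = x(T lam)^-2.
   The series converges because A is increasing on (-oo, 1+gamma), so its terms are
   dominated by A(max J) w1^i; only the bound lam_i <= max J < 1+gamma is needed. *)
From Stdlib Require Import Reals ZArith Lra Lia.
From Coquelicot Require Import Coquelicot.
Open Scope R_scope.

Lemma Afun_pos (alpha gamma Se l : R) :
  0 < alpha -> 0 < gamma -> 0 < Se -> l < 1 + gamma -> 0 < Afun alpha gamma Se l.
Proof.
  intros ha hg hs hl. unfold Afun.
  apply Rdiv_lt_0_compat; [|apply pow_lt; lra].
  apply Rmult_lt_0_compat; [apply Rmult_lt_0_compat|]; auto; apply pow_lt; auto.
Qed.

Lemma Afun_le_mono (alpha gamma Se l m : R) :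
  0 <= Se -> l <= m < 1 + gamma -> Afun alpha gamma Se l <= Afun alpha gamma Se m.
Proof.
  intros hs hlm. unfold Afun, Rdiv.
  apply Rmult_le_compat_l.
  - apply Rmult_le_pos; [apply Rmult_le_pos|]; auto; apply pow2_ge_0.
  - apply Rinv_le_contravar; [apply pow_lt; lra|].
    apply pow_incr. lra.
Qed.

Lemma ex_series_geom_dominated (u : nat -> R) (M q : R) :
  0 <= q < 1 -> (forall n, 0 <= u n <= M) -> ex_series (fun n => u n * q ^ n).
Proof.
  intros hq hu.
  apply (@ex_series_le R_AbsRing R_CompleteNormedModule _ (fun n => M * q ^ n)).
  - intro n. change (Rabs (u n * q ^ n) <= M * q ^ n).
    specialize (hu n).
    rewrite Rabs_pos_eq by (apply Rmult_le_pos; [lra | apply pow_le; lra]).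
    apply Rmult_le_compat_r; [apply pow_le|]; lra.
  - apply (ex_series_scal_l M (fun n => q ^ n)).
    exists (/ (1 - q)). apply is_series_geom. rewrite Rabs_pos_eq; lra.
Qed.

Lemma Series_gt0 (u : nat -> R) :
  (forall n, 0 <= u n) -> 0 < u 0%nat -> ex_series u -> 0 < Series u.
Proof.
  intros hu hu0 hex.
  rewrite Series_incr_1 by exact hex.
  assert (htail : Series (fun _ => 0) <= Series (fun k => u (S k))).
  { apply Series_le; [intro n; split; [lra | apply hu]|].
    exact (proj1 (ex_series_incr_1 u) hex). }
  unfold Series at 1 in htail.
  rewrite (Lim_seq_ext _ (fun _ => 0)), Lim_seq_const in htail
    by (intro n; exact (@sum_n_m_const_zero R_AbelianMonoid 0 n)).
  simpl in htail. lra.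
Qed.

Section Orbit_series.

Variables alpha gamma Se w1 b : R.
Hypotheses (ha : 0 < alpha) (hg : 0 < gamma) (hs : 0 < Se) (hw1 : 0 <= w1 < 1)
  (hb : b < 1 + gamma).
Variable lam : Z -> R.
Hypothesis hlam : forall i, lam i <= b.

Lemma ex_series_xterm : ex_series (xterm alpha gamma Se w1 lam).
Proof.
  apply (ex_series_geom_dominated
           (fun n => Afun alpha gamma Se (lam (- 1 - Z.of_nat n)%Z)) (Afun alpha gamma Se b));
    [exact hw1|].
  intro n. specialize (hlam (- 1 - Z.of_nat n)%Z). split.
  - apply Rlt_le, Afun_pos; auto; lra.
  - apply Afun_le_mono; lra.
Qed.

Lemma Series_xterm_gt0 : 0 < Series (xterm alpha gamma Se w1 lam).
Proof.
  apply Series_gt0; [| |exact ex_series_xterm]; unfold xterm.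
  - intro n. specialize (hlam (- 1 - Z.of_nat n)%Z).
    apply Rmult_le_pos; [apply Rlt_le, Afun_pos; auto; lra | apply pow_le; lra].
  - rewrite pow_O, Rmult_1_r. apply Afun_pos; auto. apply (Rle_lt_trans _ b); auto.
Qed.

End Orbit_series.

Lemma xterm_Tshift_0 (alpha gamma Se w1 : R) (lam : Z -> R) :
  xterm alpha gamma Se w1 (Tshift lam) 0%nat = Afun alpha gamma Se (lam 0%Z).
Proof. unfold xterm. rewrite pow_O, Rmult_1_r. reflexivity. Qed.

Lemma xterm_Tshift_S (alpha gamma Se w1 : R) (lam : Z -> R) (n : nat) :
  xterm alpha gamma Se w1 (Tshift lam) (S n) = w1 * xterm alpha gamma Se w1 lam n.
Proof.
  unfold xterm, Tshift.
  replace (- 1 - Z.of_nat (S n) + 1)%Z with (- 1 - Z.of_nat n)%Z by lia.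
  change (w1 ^ S n) with (w1 * w1 ^ n). ring.
Qed.

Lemma is_series_xterm_Tshift (alpha gamma Se w1 s : R) (lam : Z -> R) :
  is_series (xterm alpha gamma Se w1 lam) s ->
  is_series (xterm alpha gamma Se w1 (Tshift lam)) (Afun alpha gamma Se (lam 0%Z) + w1 * s).
Proof.
  intro hser. apply is_series_decr_1.
  rewrite xterm_Tshift_0.
  match goal with |- is_series _ ?l => replace l with (scal w1 s) end.
  - apply (is_series_ext (fun n => scal w1 (xterm alpha gamma Se w1 lam n))).
    + intro n. rewrite xterm_Tshift_S. reflexivity.
    + exact (is_series_scal_l w1 _ _ hser).
  - unfold plus, opp, scal. simpl. unfold mult. simpl. ring.
Qed.

Lemma fmap_inv_sqrt (alpha gamma Se w1 y p : R) :
  0 < p ->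
  fmap alpha gamma Se w1 y (1 / sqrt p) = / sqrt (w1 * p + (1 - w1) * Afun alpha gamma Se y).
Proof.
  intro hp. unfold fmap, Afun.
  assert (hsq : (1 / sqrt p) ^ 2 = / p).
  { rewrite <- Rsqr_pow2, Rsqr_div', Rsqr_sqrt by lra. unfold Rsqr. field. lra. }
  rewrite hsq. do 2 f_equal. unfold Rdiv. rewrite Rinv_inv. ring.
Qed.

Theorem mainTheorem5 (alpha gamma Se w1 w2 a b : R) :
  0 < alpha -> 0 < gamma -> 0 < Se ->
  0 <= w1 < 1 -> 0 <= w2 <= 1 ->
  1 <= a -> a <= b -> b < 1 + gamma ->
  (forall y, a <= y <= b -> a <= Tmap alpha gamma Se w2 y <= b) ->
  forall lam : Z -> R, inIhat alpha gamma Se w2 a b lam ->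
    ex_series (xterm alpha gamma Se w1 lam) /\
    0 < xfix alpha gamma Se w1 lam /\
    fmap alpha gamma Se w1 (lam 0%Z) (xfix alpha gamma Se w1 lam)
      = xfix alpha gamma Se w1 (Tshift lam).
Proof.
  intros ha hg hs hw1 _ _ _ hb _ lam hI.
  assert (hlam : forall i, lam i <= b) by (intro i; apply hI).
  pose proof (ex_series_xterm alpha gamma Se w1 b ha hg hs hw1 hb lam hlam) as hex.
  pose proof (Series_xterm_gt0 alpha gamma Se w1 b ha hg hs hw1 hb lam hlam) as hS.
  set (s := Series (xterm alpha gamma Se w1 lam)) in hS.
  assert (hshift : Series (xterm alpha gamma Se w1 (Tshift lam))
                   = Afun alpha gamma Se (lam 0%Z) + w1 * s).
  { apply is_series_unique, is_series_xterm_Tshift, Series_correct, hex. }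
  assert (hp : 0 < (1 - w1) * s) by (apply Rmult_lt_0_compat; lra).
  unfold xfix. fold s. rewrite hshift.
  split; [exact hex|]. split.
  - apply Rdiv_lt_0_compat; [lra | now apply sqrt_lt_R0].
  - rewrite fmap_inv_sqrt by exact hp.
    unfold Rdiv. rewrite Rmult_1_l. do 2 f_equal. ring.
Qed.
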